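(* Let $\mathcal W$ be a discrete memoryless channel from finite $\mathcal X$ to finite $\mathcal Y$. Then: (1) $U(\mathcal W)\ge0$, with equality if and only if $\mathcal W(\cdot|x)$ does not depend on $x\in\mathcal X$. (2) $U(\mathcal W)<\infty$ if and only if there exists $y\in\mathcal Y$ with $\mathcal W(y|x)>0$ for all $x\in\mathcal X$. (3) The map $\mathcal W\mapsto U(\mathcal W)$ is convex on the set of channels from $\mathcal X$ to $\mathcal Y$.
   Context: $D(P\|Q)=\sum P\log(P/Q)$ ($0\log(0/q)=0$; $+\infty$ if $P\not\ll Q$). $U(\mathcal W)=\max_{P_X\in\mathcal P(\mathcal X)}\min_{Q_Y\in\mathcal P(\mathcal Y)}D(P_X\times Q_Y\|P_{XY})$, $P_{XY}(x,y)=P_X(x)\mathcal W(y|x)$. *)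

From HB Require Import structures.
From mathcomp Require Import all_boot all_order all_algebra.
From mathcomp Require Import all_classical all_reals all_analysis.
Set Implicit Arguments. Unset Strict Implicit. Unset Printing Implicit Defensive.
Import Order.TTheory GRing.Theory Num.Theory.
Local Open Scope classical_set_scope.
Local Open Scope ring_scope.

Definition is_dist (R : realType) (T : finType) (p : T -> R) : Prop :=
  (forall t, 0 <= p t) /\ \sum_(t : T) p t = 1.

(* A discrete memoryless channel W(y|x) = W x y. *)
Definition is_channel (R : realType) (X Y : finType) (W : X -> Y -> R) : Prop :=
  forall x, is_dist (W x).

Definition KL (R : realType) (T : finType) (P Q : T -> R) : \bar R :=
  (\sum_(t : T)
     (if P t == (0%R : R) then 0%E
      else if Q t == (0%R : R) then +oo%E
      else (P t * ln (P t / Q t))%R%:E))%E.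

Definition prod_dist (R : realType) (X Y : finType) (P : X -> R) (Q : Y -> R)
  : X * Y -> R := fun xy => P xy.1 * Q xy.2.
Definition joint_dist (R : realType) (X Y : finType) (P : X -> R) (W : X -> Y -> R)
  : X * Y -> R := fun xy => P xy.1 * W xy.1 xy.2.

(* U(W) = max_{P_X} min_{Q_Y} D(P_X x Q_Y || P_XY), max/min taken as sup/inf
   in the extended reals. *)
Definition Ufun (R : realType) (X Y : finType) (W : X -> Y -> R) : \bar R :=
  ereal_sup [set ereal_inf [set KL (prod_dist P Q) (joint_dist P W)
                             | Q in [set Q : Y -> R | is_dist Q]]
            | P in [set P : X -> R | is_dist P]].

(* Write D(P_X x Q_Y || P_XY) as a sum of pointwise terms a ln(a/b).  From
   ln x <= x - 1 one gets a ln(a/b) >= (sqrt a - sqrt b)^2 + a - b, so the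
   divergence dominates the squared Hellinger distance; with the uniform input
   this gives U >= 0, and U = 0 forces W(y|x) = W(y|x').  U is finite when Q_Y
   is the point mass at an output reachable from every input, and infinite
   otherwise, since then every Q_Y charges some (x, y) with W(y|x) = 0.
   Convexity follows from the joint convexity of a ln(a/b) (the log-sum
   inequality): mixing near-optimal Q_Y's for W1 and W2 bounds the inner
   infimum for the mixed channel. *)

From HB Require Import structures.
From mathcomp Require Import all_boot all_order all_algebra.
From mathcomp Require Import all_classical all_reals all_analysis.
From mathcomp Require Import ring lra.
Import Order.TTheory GRing.Theory Num.Theory.
Set Implicit Arguments. Unset Strict Implicit. Unset Printing Implicit Defensive.
Local Open Scope ring_scope.

Section KLTerm.
Variable R : realType.
Implicit Types a b c t s : R.

Definition kl_term a b : \bar R :=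
  if a == 0 then 0%E else if b == 0 then +oo%E else (a * ln (a / b))%:E.

Lemma KLE (T : finType) (p q : T -> R) :
  KL p q = (\sum_(i : T) kl_term (p i) (q i))%E.
Proof. by []. Qed.

Lemma kl_term_neqNy a b : kl_term a b != -oo%E.
Proof. by rewrite /kl_term; case: ifP => //; case: ifP. Qed.

Lemma kl_term_diag a : kl_term a a = 0%E.
Proof. by rewrite /kl_term; case: eqVneq => // a0; rewrite divff // ln1 mulr0. Qed.

Lemma kl_termZ t a b : 0 < t -> kl_term (t * a) (t * b) = (t%:E * kl_term a b)%E.
Proof.
move=> t0; rewrite /kl_term !mulf_eq0 (gt_eqF t0) /=.
case: ifP => _; first by rewrite mule0.
case: ifP => _; first by rewrite gt0_muley ?lte_fin.
by rewrite -EFinM -mulf_div divff ?gt_eqF // mul1r mulrA.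
Qed.

Lemma mul_ln_le a c : 0 < a -> 0 < c -> a * ln (c / a) <= c - a.
Proof.
move=> a0 c0; have h : ln (c / a) <= c / a - 1.
  have := @le_ln1Dx R (c / a - 1); rewrite [1 + _]addrC subrK; apply.
  by rewrite ltrBrDr addrC subrr divr_gt0.
apply: le_trans (ler_wpM2l (ltW a0) h) _.
by rewrite mulrBr mulr1 mulrCA divff ?gt_eqF ?mulr1.
Qed.

Lemma kl_term_ge_hellinger a b : 0 <= a -> 0 <= b ->
  (((Num.sqrt a - Num.sqrt b) ^+ 2 + a - b)%:E <= kl_term a b)%E.
Proof.
move=> a0 b0; rewrite /kl_term.
have [->|an0] := eqVneq a 0.
  by rewrite lee_fin sqrtr0 sub0r sqrrN sqr_sqrtr // addr0 subrr.
have [->|bn0] := eqVneq b 0; first by rewrite leey.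
have xp : 0 < Num.sqrt a by rewrite sqrtr_gt0 lt_neqAle eq_sym an0.
have yp : 0 < Num.sqrt b by rewrite sqrtr_gt0 lt_neqAle eq_sym bn0.
rewrite lee_fin -{2 3 4}(sqr_sqrtr a0) -{2 3}(sqr_sqrtr b0).
move: (Num.sqrt a) (Num.sqrt b) xp yp => x y xp yp.
have gibbs := ler_wpM2l (ltW xp) (mul_ln_le xp yp).
rewrite -expr_div_n lnXn ?divr_gt0 // -[x / y]invf_div lnV ?posrE ?divr_gt0 //.
nra.
Qed.

Lemma kl_term_nonincr_r a b b' : 0 < a -> 0 < b -> b <= b' -> (kl_term a b' <= kl_term a b)%E.
Proof.
move=> a0 b0 bb'; rewrite /kl_term gt_eqF // !gt_eqF ?(lt_le_trans b0) //.
have b'0 : 0 < b' by apply: lt_le_trans bb'.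
rewrite lee_fin ler_pM2l // ler_ln ?posrE ?divr_gt0 //.
by rewrite ler_pM2l // lef_pV2 ?posrE.
Qed.

Lemma log_sum_le a1 a2 b1 b2 : 0 < a1 -> 0 < a2 -> 0 < b1 -> 0 < b2 ->
  (a1 + a2) * ln ((a1 + a2) / (b1 + b2)) <= a1 * ln (a1 / b1) + a2 * ln (a2 / b2).
Proof.
move=> a1p a2p b1p b2p; set A := a1 + a2; set B := b1 + b2.
have Ap : 0 < A by rewrite addr_gt0.
have Bp : 0 < B by rewrite addr_gt0.
(* Gibbs at [c_i = b_i A / B], which sum up to [A]. *)
have gibbs b a : 0 < a -> 0 < b -> a * (ln b + ln A - ln B - ln a) <= b * A / B - a.
  move=> a0 b0; have c0 : 0 < b * A / B by rewrite divr_gt0 ?mulr_gt0.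
  by have := mul_ln_le a0 c0; rewrite !ln_div ?posrE ?mulr_gt0 ?invr_gt0 // lnM.
have g1 := gibbs _ _ a1p b1p; have g2 := gibbs _ _ a2p b2p.
have e : b1 * A / B + b2 * A / B = A by rewrite /B; field; rewrite gt_eqF.
have eA : A = a1 + a2 by [].
rewrite !ln_div ?posrE // [in X in X * _]/A; nra.
Qed.

Lemma kl_term_subadd a1 a2 b1 b2 : 0 <= a1 -> 0 <= a2 -> 0 <= b1 -> 0 <= b2 ->
  (kl_term (a1 + a2) (b1 + b2) <= kl_term a1 b1 + kl_term a2 b2)%E.
Proof.
wlog a1p : a1 a2 b1 b2 / 0 < a1.
  move=> wlog a10 a20 b10 b20; have [a1p|a1n] := ltP 0 a1; first exact: wlog.
  have [a2p|a2n] := ltP 0 a2.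
    by rewrite [a1 + a2]addrC [b1 + b2]addrC addeC; apply: wlog.
  have -> : a1 = 0 by apply/eqP; rewrite eq_le a1n.
  have -> : a2 = 0 by apply/eqP; rewrite eq_le a2n.
  by rewrite addr0 /kl_term eqxx adde0.
move=> _ a20 b10 b20.
have [->|a2n] := eqVneq a2 0.
  rewrite addr0 {3}/kl_term eqxx adde0.
  have [->|b1n] := eqVneq b1 0; first by rewrite /kl_term gt_eqF // eqxx leey.
  by apply: kl_term_nonincr_r => //; [rewrite lt_neqAle eq_sym b1n | rewrite lerDl].
have a2p : 0 < a2 by rewrite lt_neqAle eq_sym a2n.
have [->|b1n] := eqVneq b1 0.
  by rewrite {2}/kl_term gt_eqF // eqxx addye ?kl_term_neqNy // leey.
have [->|b2n] := eqVneq b2 0.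
  by rewrite {3}/kl_term gt_eqF // eqxx addey ?kl_term_neqNy // leey.
have b1p : 0 < b1 by rewrite lt_neqAle eq_sym b1n.
have b2p : 0 < b2 by rewrite lt_neqAle eq_sym b2n.
rewrite /kl_term !gt_eqF ?addr_gt0 // -EFinD lee_fin.
exact: log_sum_le.
Qed.

Lemma kl_term_convex t s a1 a2 b1 b2 : 0 < t -> 0 < s ->
  0 <= a1 -> 0 <= a2 -> 0 <= b1 -> 0 <= b2 ->
  (kl_term (t * a1 + s * a2) (t * b1 + s * b2)
   <= t%:E * kl_term a1 b1 + s%:E * kl_term a2 b2)%E.
Proof.
move=> t0 s0 a10 a20 b10 b20; rewrite -!kl_termZ //.
by apply: kl_term_subadd; apply: mulr_ge0 => //; apply: ltW.
Qed.

End KLTerm.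

Section KLFinite.
Variables (R : realType) (T : finType).
Implicit Types (p q : T -> R) (t s : R) (i : T).

Definition unif_dist : T -> R := fun=> #|T|%:R^-1.

Definition delta_dist i0 : T -> R := fun i => (i == i0)%:R.

Lemma is_dist_unif : (0 < #|T|)%N -> is_dist unif_dist.
Proof.
move=> T0; split=> [i|]; first by rewrite invr_ge0 ler0n.
by rewrite sumr_const -[_ *+ #|_|]mulr_natr mulVf // pnatr_eq0 -lt0n.
Qed.

Lemma is_dist_delta i0 : is_dist (delta_dist i0).
Proof.
split=> [i|]; first exact: ler0n.
by rewrite (bigD1 i0) //= /delta_dist eqxx big1 ?addr0 // => i /negbTE ->.
Qed.

Lemma is_dist_le1 p i : is_dist p -> p i <= 1.
Proof. by move=> [p0 <-]; rewrite (bigD1 i) //= lerDl sumr_ge0. Qed.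

Lemma is_dist_neq0 p : is_dist p -> exists i, p i != 0.
Proof.
move=> [_ p1]; apply/existsP; apply: contraT => /existsPn p0.
by move: p1; rewrite big1 => [/eqP|i _]; [rewrite eq_sym oner_eq0 | apply/eqP/negPn].
Qed.

Lemma is_dist_comb t s p q : 0 <= t -> 0 <= s -> t + s = 1 ->
  is_dist p -> is_dist q -> is_dist (fun i => t * p i + s * q i).
Proof.
move=> t0 s0 ts [p0 p1] [q0 q1]; split=> [i|]; first by rewrite addr_ge0 ?mulr_ge0.
by rewrite big_split /= -!mulr_sumr p1 q1 !mulr1.
Qed.

Lemma KL_ge_hellinger p q : is_dist p -> is_dist q ->
  ((\sum_i (Num.sqrt (p i) - Num.sqrt (q i)) ^+ 2)%:E <= KL p q)%E.
Proof.
move=> [p0 p1] [q0 q1].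
have -> : \sum_i (Num.sqrt (p i) - Num.sqrt (q i)) ^+ 2 =
          \sum_i ((Num.sqrt (p i) - Num.sqrt (q i)) ^+ 2 + p i - q i).
  by rewrite sumrB big_split /= p1 q1 addrK.
by rewrite KLE -sumEFin; apply: lee_sum => i _; apply: kl_term_ge_hellinger.
Qed.

Lemma KL_ge0 p q : is_dist p -> is_dist q -> (0 <= KL p q)%E.
Proof.
move=> Hp Hq; apply: le_trans (KL_ge_hellinger Hp Hq).
by rewrite lee_fin sumr_ge0 // => i _; apply: sqr_ge0.
Qed.

Lemma KL_diag p : KL p p = 0%E.
Proof. by rewrite KLE big1 // => i _; apply: kl_term_diag. Qed.

Lemma KL_pinfty p q i : p i != 0 -> q i = 0 -> KL p q = +oo%E.
Proof.
move=> pi qi; rewrite KLE (bigD1 i) //= {1}/kl_term (negbTE pi) qi eqxx addye //.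
by rewrite esum_eqNy; apply/existsPn => j; rewrite (negbTE (kl_term_neqNy _ _)) andbF.
Qed.

Lemma KL_convex t s p1 p2 q1 q2 : 0 < t -> 0 < s ->
  (forall i, 0 <= p1 i) -> (forall i, 0 <= p2 i) ->
  (forall i, 0 <= q1 i) -> (forall i, 0 <= q2 i) ->
  (KL (fun i => t * p1 i + s * p2 i)%R (fun i => t * q1 i + s * q2 i)%R
   <= t%:E * KL p1 q1 + s%:E * KL p2 q2)%E.
Proof.
move=> t0 s0 p10 p20 q10 q20.
have def (a b c d : R) : (kl_term a b +? kl_term c d)%E.
  by rewrite /adde_def !(negbTE (kl_term_neqNy _ _)) !andbF.
have -> : (t%:E * KL p1 q1 + s%:E * KL p2 q2 =
           \sum_i (t%:E * kl_term (p1 i) (q1 i) + s%:E * kl_term (p2 i) (q2 i)))%E.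
  by rewrite !KLE !fin_num_sume_distrr // -big_split.
by rewrite KLE; apply: lee_sum => i _; apply: kl_term_convex.
Qed.

End KLFinite.

Arguments unif_dist {R T}.

Lemma lee_ereal_inf_comb (R : realType) (A : \bar R) (S1 S2 : set (\bar R)) (t s : R) :
  0 < t -> 0 < s -> t + s = 1 ->
  (forall e, S1 e -> (0 <= e)%E) -> (forall e, S2 e -> (0 <= e)%E) ->
  (forall e1 e2, S1 e1 -> S2 e2 -> (A <= t%:E * e1 + s%:E * e2)%E) ->
  (A <= t%:E * ereal_inf S1 + s%:E * ereal_inf S2)%E.
Proof.
move=> t0 s0 ts S10 S20 hA.
have i1 : (0 <= t%:E * ereal_inf S1)%E.
  by apply: mule_ge0; [rewrite lee_fin ltW | exact: le_ereal_inf_tmp].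
have i2 : (0 <= s%:E * ereal_inf S2)%E.
  by apply: mule_ge0; [rewrite lee_fin ltW | exact: le_ereal_inf_tmp].
case E1: (ereal_inf S1) i1 => [r1| |] i1; last 2 first.
- by rewrite gt0_muley ?lte_fin // addye ?leey // gt_eqF // (lt_le_trans _ i2).
- by rewrite gt0_muleNy ?lte_fin in i1.
case E2: (ereal_inf S2) i2 => [r2| |] i2; last 2 first.
- by rewrite gt0_muley ?lte_fin // addey ?leey.
- by rewrite gt0_muleNy ?lte_fin in i2.
apply/lee_addgt0Pr => e e0.
have [e1 S1e1 lt1] : exists2 y, S1 y & (y < (r1 + e)%:E)%E.
  by apply: ereal_inf_lt; rewrite E1 lte_fin ltrDl.
have [e2 S2e2 lt2] : exists2 y, S2 y & (y < (r2 + e)%:E)%E.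
  by apply: ereal_inf_lt; rewrite E2 lte_fin ltrDl.
apply: le_trans (hA _ _ S1e1 S2e2) _.
have t0' : (0 <= t%:E)%E by rewrite lee_fin ltW.
have s0' : (0 <= s%:E)%E by rewrite lee_fin ltW.
apply: le_trans (leeD (lee_wpmul2l t0' (ltW lt1)) (lee_wpmul2l s0' (ltW lt2))) _.
rewrite -!EFinM -!EFinD lee_fin.
have -> : t * (r1 + e) + s * (r2 + e) = t * r1 + s * r2 + (t + s) * e by ring.
by rewrite ts mul1r.
Qed.

Section Channel.
Variables (R : realType) (X Y : finType).
Implicit Types (P : X -> R) (Q : Y -> R) (W : X -> Y -> R).

Lemma is_dist_prod P Q : is_dist P -> is_dist Q -> is_dist (prod_dist P Q).
Proof.
move=> [P0 P1] [Q0 Q1]; split=> [xy|]; first by rewrite mulr_ge0.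
rewrite -(pair_big xpredT xpredT (fun x y => P x * Q y)) /=.
by under eq_bigr do rewrite -mulr_sumr Q1 mulr1.
Qed.

Lemma is_dist_joint P W : is_dist P -> is_channel W -> is_dist (joint_dist P W).
Proof.
move=> [P0 P1] HW; split=> [xy|]; first by rewrite mulr_ge0 // (HW _).1.
rewrite -(pair_big xpredT xpredT (fun x y => P x * W x y)) /=.
by under eq_bigr => x _ do rewrite -mulr_sumr (HW x).2 mulr1.
Qed.

Definition Uat P W : \bar R :=
  ereal_inf [set KL (prod_dist P Q) (joint_dist P W) | Q in [set Q | is_dist Q]].

Lemma Uat_le_KL P Q W : is_dist Q -> (Uat P W <= KL (prod_dist P Q) (joint_dist P W))%E.
Proof. by move=> HQ; apply: ereal_inf_lbound; exists Q. Qed.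

Lemma Uat_le_Ufun P W : is_dist P -> (Uat P W <= Ufun W)%E.
Proof. by move=> HP; apply: ereal_sup_ubound; exists P. Qed.

Lemma Uat_ge0 P W : is_dist P -> is_channel W -> (0 <= Uat P W)%E.
Proof.
move=> HP HW; apply: le_ereal_inf_tmp => _ [Q HQ <-].
by apply: KL_ge0; [apply: is_dist_prod | apply: is_dist_joint].
Qed.

Lemma Ufun_ge0 W : (0 < #|X|)%N -> is_channel W -> (0 <= Ufun W)%E.
Proof.
move=> X0 HW; have HP := is_dist_unif R X0.
exact: le_trans (Uat_ge0 HP HW) (Uat_le_Ufun W HP).
Qed.

Lemma Uat_convex P W1 W2 t s : 0 < t -> 0 < s -> t + s = 1 ->
  is_dist P -> is_channel W1 -> is_channel W2 ->
  (Uat P (fun x y => t * W1 x y + s * W2 x y)%R <= t%:E * Uat P W1 + s%:E * Uat P W2)%E.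
Proof.
move=> t0 s0 ts HP HW1 HW2.
have KL0 W Q : is_channel W -> is_dist Q -> (0 <= KL (prod_dist P Q) (joint_dist P W))%E.
  by move=> HW HQ; apply: KL_ge0; [apply: is_dist_prod | apply: is_dist_joint].
apply: lee_ereal_inf_comb => //; [by move=> _ [Q HQ <-]; apply: KL0..|].
move=> _ _ [Q1 HQ1 <-] [Q2 HQ2 <-].
apply: le_trans (Uat_le_KL _ _ (is_dist_comb (ltW t0) (ltW s0) ts HQ1 HQ2)) _.
have -> : prod_dist P (fun y => t * Q1 y + s * Q2 y) =
          (fun xy => t * prod_dist P Q1 xy + s * prod_dist P Q2 xy).
  by apply/funext => xy; rewrite /prod_dist; ring.
have -> : joint_dist P (fun x y => t * W1 x y + s * W2 x y) =
          (fun xy => t * joint_dist P W1 xy + s * joint_dist P W2 xy).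
  by apply/funext => xy; rewrite /joint_dist; ring.
apply: KL_convex => // xy.
- exact: (is_dist_prod HP HQ1).1.
- exact: (is_dist_prod HP HQ2).1.
- exact: (is_dist_joint HP HW1).1.
- exact: (is_dist_joint HP HW2).1.
Qed.

Lemma Ufun_convex W1 W2 t : is_channel W1 -> is_channel W2 -> 0 <= t <= 1 ->
  (Ufun (fun x y => t * W1 x y + (1 - t) * W2 x y)%R
   <= t%:E * Ufun W1 + (1 - t)%:E * Ufun W2)%E.
Proof.
move=> HW1 HW2 /andP[t0 t1].
have [->|tn0] := eqVneq t 0.
  have -> : (fun x y => 0 * W1 x y + (1 - 0) * W2 x y) = W2.
    by apply/funext => x; apply/funext => y; rewrite mul0r add0r subr0 mul1r.
  by rewrite mul0e add0e subr0 mul1e.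
have [->|tn1] := eqVneq t 1.
  have -> : (fun x y => 1 * W1 x y + (1 - 1) * W2 x y) = W1.
    by apply/funext => x; apply/funext => y; rewrite subrr mul0r addr0 mul1r.
  by rewrite subrr mul0e adde0 mul1e.
have tp : 0 < t by rewrite lt_neqAle eq_sym tn0.
have sp : 0 < 1 - t by rewrite subr_gt0 lt_neqAle tn1.
apply: ge_ereal_sup => _ [P HP <-].
apply: le_trans (Uat_convex tp sp (subrKC _ _) HP HW1 HW2) _.
by apply: leeD; apply: lee_wpmul2l; rewrite ?lee_fin ?(ltW tp) ?(ltW sp) ?Uat_le_Ufun.
Qed.

Lemma const_Ufun_eq0 W : (0 < #|X|)%N -> is_channel W ->
  (forall x x' y, W x y = W x' y) -> Ufun W = 0%E.
Proof.
move=> X0 HW Wc; apply/eqP; rewrite eq_le Ufun_ge0 // andbT.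
have [x0 _] : exists x0, x0 \in X by apply/card_gt0P.
apply: ge_ereal_sup => _ [P HP <-]; apply: le_trans (Uat_le_KL P W (HW x0)) _.
have -> : prod_dist P (W x0) = joint_dist P W.
  by apply/funext => -[x y]; rewrite /prod_dist /joint_dist (Wc x0 x).
by rewrite KL_diag.
Qed.

Lemma Ufun_ge_sqrt_gap W x x' y : (0 < #|X|)%N -> is_channel W ->
  ((#|X|%:R^-1 * (Num.sqrt (W x y) - Num.sqrt (W x' y)) ^+ 2 / 2)%:E <= Ufun W)%E.
Proof.
move=> X0 HW; have [<-|xx'] := eqVneq x x'.
  by rewrite subrr expr0n /= mulr0 mul0r Ufun_ge0.
have HP := is_dist_unif R X0; set u := #|X|%:R^-1 : R.
have u0 : 0 <= u by rewrite invr_ge0.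
apply: le_trans (Uat_le_Ufun W HP); apply: le_ereal_inf_tmp => _ [Q HQ <-].
apply: le_trans (KL_ge_hellinger (is_dist_prod HP HQ) (is_dist_joint HP HW)).
have term (x1 : X) : (Num.sqrt (prod_dist unif_dist Q (x1, y))
                 - Num.sqrt (joint_dist unif_dist W (x1, y))) ^+ 2
               = u * (Num.sqrt (Q y) - Num.sqrt (W x1 y)) ^+ 2.
  by rewrite /prod_dist /joint_dist /= !sqrtrM // -mulrBr exprMn sqr_sqrtr.
rewrite lee_fin (bigD1 (x, y)) //= (bigD1 (x', y)) /=; last first.
  by rewrite xpair_eqE eqxx andbT eq_sym.
rewrite !term addrA -mulrDr; apply: ler_wpDr; first by rewrite sumr_ge0 // => i _; apply: sqr_ge0.
rewrite -mulrA ler_wpM2l // -subr_ge0.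
set a := Num.sqrt (W x y); set b := Num.sqrt (W x' y); set q := Num.sqrt (Q y).
have -> : (q - a) ^+ 2 + (q - b) ^+ 2 - (a - b) ^+ 2 / 2 = (2 * q - a - b) ^+ 2 / 2.
  by field.
by rewrite divr_ge0 ?sqr_ge0.
Qed.

Lemma Ufun_eq0_const W : (0 < #|X|)%N -> is_channel W -> Ufun W = 0%E ->
  forall x x' y, W x y = W x' y.
Proof.
move=> X0 HW U0 x x' y; have := Ufun_ge_sqrt_gap x x' y X0 HW.
rewrite U0 lee_fin -mulrA pmulr_rle0 ?invr_gt0 ?ltr0n // pmulr_lle0 ?invr_gt0 //.
move=> gap; apply/eqP; rewrite -eqr_sqrt ?(HW _).1 // -subr_eq0 -sqrf_eq0.
by rewrite eq_le gap sqr_ge0.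
Qed.

Lemma Ufun_lty W y : is_channel W -> (forall x, 0 < W x y) -> (Ufun W < +oo)%E.
Proof.
move=> HW Wy; set M := \sum_(xy : X * Y) `|ln (W xy.1 y)|.
apply: (@le_lt_trans _ _ M%:E); last by rewrite ltry.
apply: ge_ereal_sup => _ [P HP <-].
apply: le_trans (Uat_le_KL P W (is_dist_delta R y)) _.
rewrite KLE /M -sumEFin; apply: lee_sum => -[x y'] _.
rewrite /prod_dist /joint_dist /delta_dist /=.
have [->|_] := eqVneq y' y; last by rewrite mulr0 /kl_term eqxx lee_fin.
rewrite mulr1 /kl_term; have [//|Px0] := eqVneq (P x) 0.
have Pxp : 0 < P x by rewrite lt_neqAle eq_sym Px0 (HP.1 x).
rewrite gt_eqF ?mulr_gt0 // invfM mulrA divff // mul1r lnV ?posrE // lee_fin.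
have := is_dist_le1 x HP; have := normr_ge0 (ln (W x y)).
have : - ln (W x y) <= `|ln (W x y)| by rewrite -normrN ler_norm.
nra.
Qed.

Lemma Ufun_lty_common_output W : (0 < #|X|)%N -> is_channel W ->
  (Ufun W < +oo)%E -> exists y, forall x, 0 < W x y.
Proof.
move=> X0 HW Ufin; apply: contrapT => nocommon.
have HP := is_dist_unif R X0.
have Uoo : Uat unif_dist W = +oo%E.
  apply/eqP; rewrite -leye_eq; apply: le_ereal_inf_tmp => _ [Q HQ <-].
  have [y Qy] := is_dist_neq0 HQ.
  have [x Wx] : exists x, W x y = 0.
    apply: contrapT => Wpos; apply: nocommon; exists y => x.
    by rewrite lt_neqAle eq_sym (HW x).1 andbT; apply/eqP => W0; apply: Wpos; exists x.
  rewrite (@KL_pinfty _ _ _ _ (x, y)) // /prod_dist /joint_dist /= ?Wx ?mulr0 //.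
  by rewrite mulf_neq0 // invr_eq0 pnatr_eq0 -lt0n.
by move: Ufin; have := Uat_le_Ufun W HP; rewrite Uoo leye_eq => /eqP ->.
Qed.

End Channel.

Theorem mainTheorem18 (R : realType) (X Y : finType) (HX : (0 < #|X|)%N) :
  (forall W : X -> Y -> R, is_channel W ->
     (0 <= Ufun W)%E /\
     (Ufun W = 0%E <-> forall (x x' : X) (y : Y), W x y = W x' y)) /\
  (forall W : X -> Y -> R, is_channel W ->
     ((Ufun W < +oo)%E <-> exists y : Y, forall x : X, 0 < W x y)) /\
  (forall (W1 W2 : X -> Y -> R) (t : R), is_channel W1 -> is_channel W2 ->
     0 <= t <= 1 ->
     (Ufun (fun x y => (t * W1 x y + (1 - t) * W2 x y)%R)
        <= t%:E * Ufun W1 + (1 - t)%R%:E * Ufun W2)%E).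
Proof.
split; [|split].
- move=> W HW; split; first exact: Ufun_ge0.
  by split; [exact: Ufun_eq0_const | exact: const_Ufun_eq0].
- move=> W HW; split; first exact: Ufun_lty_common_output.
  by case=> y; apply: Ufun_lty.
- by move=> W1 W2 t; apply: Ufun_convex.
Qed.
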